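(* Let $G$ be a digraph such that $\mathrm{wcol}_\infty(G)\le c$ for some constant $c$. Then $G$ does not contain a directed path of length greater than $2^c-2$, and every directed topological minor $H$ of $G$ satisfies $|E(H)|/|V(H)|\le 4c$.
   Context: For a linear order $L$ of $V(G)$, $u$ is weakly $r$-reachable from $v$ if there is a directed path of length at most $r$ from $u$ to $v$ or from $v$ to $u$ on which $u$ is the $L$-minimum; $\mathrm{WReach}_r[G,L,v]$ is the set of such $u$; $\mathrm{wcol}_r(G)=\min_L\max_{v}|\mathrm{WReach}_r[G,L,v]|$, and for an $n$-vertex digraph $\mathrm{wcol}_\infty(G)=\mathrm{wcol}_n(G)$. A digraph $H$ is a directed topological minor of $G$ if there is an injective map $\delta:V(H)\to V(G)$ and a map sending each arc $(u,v)$ of $H$ to a directed path in $G$ from $\delta(u)$ to $\delta(v)$ that is internally vertex-disjoint from all $\delta(w)$ and from all other such paths. *)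

From mathcomp Require Import all_boot all_order all_fingroup.
From mathcomp Require Import boolp.
Set Implicit Arguments. Unset Strict Implicit. Unset Printing Implicit Defensive.

(* A digraph is a finite type V with an arc relation e (arc (x,y) iff e x y). *)

(* A directed path from x to y of length n (number of arcs):
   the vertex sequence x :: p, pairwise distinct, consecutive vertices joined
   by arcs, ending at y, with size p = n. *)
Definition dipath (V : finType) (e : rel V) (x : V) (p : seq V) : bool :=
  path e x p && uniq (x :: p).

(* Linear order on V encoded by a permutation s : position of v is enum_rank (s v). *)
Definition Lkey (V : finType) (s : {perm V}) (v : V) : nat := enum_rank (s v).

Definition wreach_rel (V : finType) (e : rel V) (r : nat) (s : {perm V})
  (v u : V) : Prop :=
  (exists p : seq V, [/\ (size p <= r)%N, dipath e u p, last u p = v &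
       forall w, w \in u :: p -> (Lkey s u <= Lkey s w)%N]) \/
  (exists p : seq V, [/\ (size p <= r)%N, dipath e v p, last v p = u &
       forall w, w \in v :: p -> (Lkey s u <= Lkey s w)%N]).

Definition WReach (V : finType) (e : rel V) (r : nat) (s : {perm V}) (v : V)
  : {set V} := [set u | `[< wreach_rel e r s v u >]].

Definition wcol_for (V : finType) (e : rel V) (r : nat) (s : {perm V}) : nat :=
  \max_(v : V) #|WReach e r s v|.

Definition wcol (V : finType) (e : rel V) (r : nat) : nat :=
  wcol_for e r [arg min_(s < (1%g : {perm V})) wcol_for e r s].

Definition wcol_inf (V : finType) (e : rel V) : nat := wcol e #|V|.

(* (W, eH) is a directed topological minor of (V, e): injective delta, and for
   each arc (a,b) of H an interior vertex sequence q a b so that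
   delta a :: rcons (q a b) (delta b) is a directed path of G, whose interior
   avoids every delta w and the interiors of all other arc paths. *)
Definition dtopminor (W V : finType) (eH : rel W) (e : rel V) : Prop :=
  exists (delta : W -> V) (q : W -> W -> seq V),
    [/\ injective delta,
        (forall a b, eH a b -> dipath e (delta a) (rcons (q a b) (delta b))),
        (forall a b w, eH a b -> delta w \notin q a b) &
        (forall a b a' b' x, eH a b -> eH a' b' -> x \in q a b -> x \in q a' b' ->
            a = a' /\ b = b')].

Definition arcs (W : finType) (eH : rel W) : {set W * W} :=
  [set ab | eH ab.1 ab.2].

From mathcomp Require Import all_boot all_order all_fingroup.
From mathcomp Require Import boolp zify.
Set Implicit Arguments. Unset Strict Implicit. Unset Printing Implicit Defensive.

(* On a directed path, the L-minimum m is weakly reachable from every vertex of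
   the path, along the segment between them. Splitting a path with at least 2^k
   vertices at m, one side keeps 2^(k-1) vertices; by induction it contains a
   vertex v whose weak reachability set meets that side in k vertices, and m is
   one more. Hence a path with 2^c vertices forces |WReach[v]| > c.
   For a topological minor, the L-minimum m of the path of an arc (a, b) is
   weakly reachable from both delta a and delta b. If m = delta a the arc is
   determined by (b, delta a), otherwise by (a, m); both pairs lie among the at
   most c |V(H)| pairs (w, y) with y weakly reachable from delta w, so
   |E(H)| <= 2c |V(H)|. *)

Lemma card_dep_pairs_le (T U : finType) (F : T -> {set U}) (c : nat) :
  (forall x, #|F x| <= c) -> #|[set xy : T * U | xy.2 \in F xy.1]| <= c * #|T|.
Proof.
move=> leFc; rewrite -sum1_card.
rewrite (eq_bigl (fun xy : T * U => predT xy.1 && (xy.2 \in F xy.1))); last first.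
  by move=> [x y]; rewrite inE.
rewrite -(pair_big_dep predT (fun x y => y \in F x) (fun _ _ => 1)) /=.
rewrite mulnC -sum_nat_const; apply: leq_sum => x _.
by rewrite sum1_card leFc.
Qed.

Section WeakReachability.

Context {V : finType} {e : rel V} {s : {perm V}}.

(* [dipath e x p] is convertible to [is_dipath (x :: p)]. *)
Definition is_dipath (t : seq V) : bool := sorted e t && uniq t.

Lemma is_dipath_infix (t1 t2 : seq V) :
  infix t1 t2 -> is_dipath t2 -> is_dipath t1.
Proof.
move=> t12 /andP[st2 ut2].
by rewrite /is_dipath (infix_sorted t12 st2) (infix_uniq t12 ut2).
Qed.

Lemma size_dipath (x : V) (p : seq V) : dipath e x p -> size p < #|V|.
Proof. by case/andP=> _ /card_uniqP /= <-; apply: max_card. Qed.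

Lemma wreach_refl (r : nat) (v : V) : v \in WReach e r s v.
Proof.
rewrite inE; apply/asboolP; left; exists [::]; split=> // w.
by rewrite inE => /eqP->.
Qed.

Lemma wreach_path_from_min (r : nat) (u : V) (p : seq V) :
  size p <= r -> dipath e u p ->
  {in u :: p, forall w, Lkey s u <= Lkey s w} -> u \in WReach e r s (last u p).
Proof. by move=> ? ? ?; rewrite inE; apply/asboolP; left; exists p. Qed.

Lemma wreach_path_to_min (r : nat) (v : V) (p : seq V) :
  size p <= r -> dipath e v p ->
  {in v :: p, forall w, Lkey s (last v p) <= Lkey s w} ->
  last v p \in WReach e r s v.
Proof. by move=> ? ? ?; rewrite inE; apply/asboolP; right; exists p. Qed.

Lemma min_in_wreach (t : seq V) (m v : V) :
  is_dipath t -> m \in t -> v \in t -> {in t, forall w, Lkey s m <= Lkey s w} ->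
  m \in WReach e #|V| s v.
Proof.
move=> Dt mt vt mmin; case/splitPr: mt Dt vt mmin => t1 t2 Dt.
rewrite mem_cat => /orP[vt1 | vt2] mmin.
  case/splitPr: vt1 Dt mmin => a b.
  have -> : (a ++ v :: b) ++ m :: t2 = a ++ (v :: rcons b m) ++ t2.
    by rewrite -catA /= -cats1 -catA.
  move=> Dt mmin; have Dvm := is_dipath_infix (infix_infix _ _ _) Dt.
  rewrite -[m](last_rcons v b); apply: wreach_path_to_min => [|//|w wvm].
    exact/ltnW/(size_dipath Dvm).
  by rewrite last_rcons; apply: mmin; rewrite !mem_cat wvm orbT.
case/splitPl: vt2 Dt mmin => p1 p2 <- Dt mmin.
have Dmv := is_dipath_infix (infix_infix t1 (m :: p1) p2) Dt.
apply: wreach_path_from_min => [|//|w wmv]; first exact/ltnW/(size_dipath Dmv).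
by apply: mmin; rewrite mem_cat -cat_cons mem_cat wmv !orbT.
Qed.

Definition Lmin (x : V) (t : seq V) : V := [arg min_(w < x in x :: t) Lkey s w].

Lemma Lmin_mem (x : V) (t : seq V) : Lmin x t \in x :: t.
Proof. by rewrite /Lmin; case: arg_minnP => //; rewrite mem_head. Qed.

Lemma Lmin_le (x : V) (t : seq V) :
  {in x :: t, forall w, Lkey s (Lmin x t) <= Lkey s w}.
Proof. by rewrite /Lmin; case: arg_minnP => //; rewrite mem_head. Qed.

Lemma wreach_on_long_path (k : nat) (t : seq V) :
  is_dipath t -> 2 ^ k <= size t ->
  exists2 v, v \in t & k < #|[set u in t | u \in WReach e #|V| s v]|.
Proof.
elim: k t => [|k IHk] [|x t] Dt tk; rewrite ?leqn0 ?expn_eq0 // in tk.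
  exists x; first exact: mem_head.
  by rewrite card_gt0; apply/set0Pn; exists x; rewrite in_set mem_head wreach_refl.
set m := Lmin x t.
have grow t' : is_dipath t' -> {subset t' <= x :: t} -> m \notin t' ->
    2 ^ k <= size t' ->
    exists2 v, v \in x :: t & k.+1 < #|[set u in x :: t | u \in WReach e #|V| s v]|.
  move=> Dt' t't mt' /(IHk _ Dt') [v vt' ltkv]; exists v; first exact: t't.
  have mv : m \in WReach e #|V| s v.
    exact: min_in_wreach Dt (Lmin_mem x t) (t't v vt') (@Lmin_le x t).
  apply: (@leq_trans #|m |: [set u in t' | u \in WReach e #|V| s v]|).
    by rewrite cardsU1 inE (negbTE mt').
  apply/subset_leq_card/subsetP => u /setU1P[-> | /setIdP[/t't ut uv]];
    by apply/setIdP; split; rewrite ?Lmin_mem.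
have [t1 [t2 Et]] : exists t1 t2, x :: t = t1 ++ m :: t2.
  by case/splitPr: (Lmin_mem x t) => t1 t2; exists t1, t2.
have sub12 : {subset t1 <= x :: t} /\ {subset t2 <= x :: t}.
  by split=> u ut; rewrite Et mem_cat ?inE ut ?orbT.
rewrite Et in Dt tk; have /andP[_ ] := Dt.
rewrite cat_uniq /= negb_or => /and3P[_ /andP[mt1 _] /andP[mt2 _]].
rewrite size_cat /= expnS in tk.
have [k1 | k1] := leqP (2 ^ k) (size t1).
  exact: grow (is_dipath_infix (prefix_infix t1 (m :: t2)) Dt) sub12.1 mt1 k1.
apply: grow (is_dipath_infix (infix_catl t1 (suffix_infix [:: m] t2)) Dt) sub12.2 mt2 _.
lia.
Qed.

Context {c : nat}.
Hypothesis wreach_le : forall v, #|WReach e #|V| s v| <= c.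

Lemma dipath_size_le (x : V) (p : seq V) : dipath e x p -> size p + 2 <= 2 ^ c.
Proof.
move=> Dp; rewrite leqNgt addn2 ltnS; apply/negP => long.
have [v _] := wreach_on_long_path Dp long; apply/negP; rewrite -leqNgt.
by apply: leq_trans (wreach_le v); apply/subset_leq_card/subsetP => u /setIdP[].
Qed.

Section TopologicalMinor.

Context {W : finType} {eH : rel W} {delta : W -> V} {q : W -> W -> seq V}.
Hypotheses (delta_inj : injective delta)
  (arc_dipath : forall a b, eH a b -> dipath e (delta a) (rcons (q a b) (delta b)))
  (arc_avoids_branch : forall a b w, eH a b -> delta w \notin q a b)
  (arcs_disjoint : forall a b a' b' x, eH a b -> eH a' b' ->
     x \in q a b -> x \in q a' b' -> a = a' /\ b = b').

Lemma arc_head_unique (a b a' b' : W) (x : V) : eH a b -> eH a' b' ->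
  x \in rcons (q a b) (delta b) -> x \in rcons (q a' b') (delta b') -> b = b'.
Proof.
move=> ab a'b'; rewrite !mem_rcons !inE => /predU1P[-> | xq] /predU1P[xb' | xq'].
- exact: delta_inj.
- by rewrite (negbTE (arc_avoids_branch b a'b')) in xq'.
- by rewrite xb' (negbTE (arc_avoids_branch b' ab)) in xq.
- exact: (arcs_disjoint ab a'b' xq xq').2.
Qed.

Lemma card_arcs_le : #|arcs eH| <= 2 * c * #|W|.
Proof.
pose m a b := Lmin (delta a) (rcons (q a b) (delta b)).
have m_wreach a b v : eH a b -> v \in delta a :: rcons (q a b) (delta b) ->
    m a b \in WReach e #|V| s v.
  move=> ab vab.
  exact: min_in_wreach (arc_dipath ab) (Lmin_mem _ _) vab (@Lmin_le _ _).
pose Q := [set wy : W * V | wy.2 \in WReach e #|V| s (delta wy.1)].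
have leQ : #|Q| <= c * #|W|.
  exact: (card_dep_pairs_le (F := fun w => WReach e #|V| s (delta w))).
pose B := [set ab : W * W | m ab.1 ab.2 == delta ab.1].
have leB : #|arcs eH :&: B| <= #|Q|.
  rewrite -(card_in_imset (f := fun ab : W * W => (ab.2, delta ab.1))); last first.
    by move=> [a b] [a' b'] _ _ [-> /delta_inj ->].
  apply/subset_leq_card/subsetP => _ /imsetP[[a b] /setIP[ab Bab] ->].
  rewrite !inE /= in ab Bab; rewrite in_set /= -(eqP Bab).
  by apply: m_wreach; rewrite // inE mem_rcons mem_head orbT.
have leNB : #|arcs eH :\: B| <= #|Q|.
  have m_tail a b : (a, b) \in arcs eH :\: B -> eH a b /\
      m a b \in rcons (q a b) (delta b).
    rewrite !inE /= => /andP[Bab ab]; split=> //.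
    by have := Lmin_mem (delta a) (rcons (q a b) (delta b)); rewrite inE (negbTE Bab).
  rewrite -(card_in_imset (f := fun ab : W * W => (ab.1, m ab.1 ab.2))); last first.
    move=> [a b] [a' b'] /m_tail[ab mab] /m_tail[a'b' ma'b'] [/= Ea Em].
    subst a'; rewrite -Em in ma'b'.
    by rewrite (arc_head_unique ab a'b' mab ma'b').
  apply/subset_leq_card/subsetP => _ /imsetP[[a b] /m_tail[ab _] ->].
  by rewrite in_set /=; apply: m_wreach; rewrite ?mem_head.
rewrite -(cardsID B (arcs eH)) -mulnA mul2n -addnn.
by rewrite leq_add ?(leq_trans _ leQ).
Qed.

End TopologicalMinor.

End WeakReachability.

Lemma wcol_inf_attained (V : finType) (e : rel V) :
  exists s : {perm V}, forall v, #|WReach e #|V| s v| <= wcol_inf e.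
Proof. by eexists => v; apply: (leq_bigmax v). Qed.

Theorem mainTheorem19 (V : finType) (e : rel V) (c : nat) :
  (wcol_inf e <= c)%N ->
  (forall (x : V) (p : seq V), dipath e x p -> (size p + 2 <= 2 ^ c)%N) /\
  (forall (W : finType) (eH : rel W), dtopminor eH e ->
     (#|arcs eH| <= 4 * c * #|W|)%N).
Proof.
move=> wcol_le; have [s wreach_le] := wcol_inf_attained e.
have {}wreach_le v : #|WReach e #|V| s v| <= c := leq_trans (wreach_le v) wcol_le.
split=> [x p | W eH [delta [q [delta_inj arc_dipath avoid disjoint]]]].
  exact: (dipath_size_le wreach_le).
apply: leq_trans (card_arcs_le wreach_le delta_inj arc_dipath avoid disjoint) _.
by apply: leq_mul => //; apply: leq_mul.
Qed.
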